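(* Let $G$ be a finite group and $p$ a prime dividing $|G|$. If $\mathcal{A}_p(G)\subseteq\mathcal{S}_p(G)$ is a strong deformation retract, then both $\mathcal{A}_p(G)'/G$ and $\mathcal{S}_p(G)'/G$ are contractible finite spaces. In particular, this holds when the Sylow $p$-subgroups of $G$ are abelian. Moreover, in the latter case $\mathcal{B}_p(G)\subseteq\mathcal{S}_p(G)$ is a strong deformation retract and $\mathcal{B}_p(G)'/G$ is a contractible finite space.
   Context: $\mathcal{S}_p(G)$ is the poset of non-trivial $p$-subgroups of $G$, $\mathcal{A}_p(G)$ its subposet of non-trivial elementary abelian $p$-subgroups, and $\mathcal{B}_p(G)=\{P\in\mathcal{S}_p(G):P=\mathcal{O}_p(N_G(P))\}$ the $p$-radical subgroups ($\mathcal{O}_p(H)$ = largest normal $p$-subgroup of $H$). $G$ acts by conjugation. Finite posets are finite $T_0$ spaces with open sets the down-sets; contractibility and strong deformation retracts refer to this topology. For a poset $X$, $X'$ is the poset of non-empty chains ordered by inclusion, with $G$ acting componentwise; $X'/G$ is the orbit poset with $\overline{c}\le\overline{d}$ iff some representatives satisfy $c_1\subseteq d_1$. *)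

From HB Require Import structures.
From mathcomp Require Import all_boot all_order all_algebra.
From mathcomp Require Import boolp classical_sets topology reals.
From mathcomp Require Import Rstruct Rstruct_topology.
From mathcomp Require Import all_fingroup all_solvable.
From Stdlib Require Import Rdefinitions.
Import Order.TTheory GRing.Theory Num.Theory.

Set Implicit Arguments.
Unset Strict Implicit.
Unset Printing Implicit Defensive.

Local Open Scope classical_set_scope.

(* A finite poset is given as a subset S of a finite type T together with    *)
(* an order relation le on T (restricted to S).  The associated finite      *)
(* space has carrier the elements of S and open sets the down-sets.         *)

(* the carrier; le is a (phantom) parameter, the topology depends on it *)
Definition finspace (T : finType) (le : rel T) (S : {set T}) : Type :=
  {x : T | x \in S}.

Section FinSpace.
Variables (T : finType) (le : rel T) (S : {set T}).
Local Notation finspace := (finspace le S).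
HB.instance Definition _ := Choice.on finspace.

Definition downset_open : set_system finspace :=
  [set U | forall x y : finspace, le (val x) (val y) -> U y -> U x].

Lemma downset_openT : downset_open setT.
Proof. by []. Qed.

Lemma downset_openI : setI_closed downset_open.
Proof. by move=> A B hA hB x y lexy [Ay By]; split; [exact: hA lexy Ay|exact: hB lexy By]. Qed.

Lemma downset_open_bigU (I : Type) (f : I -> set finspace) :
  (forall i, downset_open (f i)) -> downset_open (\bigcup_i f i).
Proof. by move=> hf x y lexy [i _ fiy]; exists i => //; exact: hf lexy fiy. Qed.

HB.instance Definition _ := isOpenTopological.Build finspace
  downset_openT downset_openI downset_open_bigU.

End FinSpace.

Definition unit_itv : set R := [set t : R | (0 <= t <= 1)%R].

Definition contractible (X : topologicalType) : Prop :=
  exists (x0 : X) (H : (X * R)%type -> X),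
    [/\ {within [set: X] `*` unit_itv, continuous H},
        (forall x, H (x, 0%R) = x) &
        (forall x, H (x, 1%R) = x0)].

Definition strong_deformation_retract (X : topologicalType) (A : set X) : Prop :=
  exists H : (X * R)%type -> X,
    [/\ {within [set: X] `*` unit_itv, continuous H},
        (forall x, H (x, 0%R) = x),
        (forall x, A (H (x, 1%R))) &
        (forall a t, A a -> unit_itv t -> H (a, t) = a)].

Section SubgroupPosets.
Local Close Scope classical_set_scope.
Local Open Scope group_scope.
Variables (gT : finGroupType) (p : nat) (G : {group gT}).

Definition Sp : {set {group gT}} :=
  [set H : {group gT} | [&& H \subset G, p.-group H & H :!=: 1]].

Definition Ap : {set {group gT}} :=
  [set H : {group gT} | [&& H \subset G, p.-abelem H & H :!=: 1]].

Definition Bp : {set {group gT}} :=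
  [set H : {group gT} in Sp | H :==: 'O_p('N_G(H))].

Definition sub_le : rel {group gT} := fun H K => H \subset K.

End SubgroupPosets.

(* The poset of non-empty chains X' and the orbit poset X'/G for a poset    *)
(* X of subgroups (ordered by inclusion) with G acting by conjugation.      *)

Section ChainOrbits.
Local Close Scope classical_set_scope.
Local Open Scope group_scope.
Variables (gT : finGroupType) (G : {group gT}).

Definition chains (X : {set {group gT}}) : {set {set {group gT}}} :=
  [set c : {set {group gT}} | [&& c != finset.set0, c \subset X &
     [forall H in c, forall K in c, (H \subset K) || (K \subset H)]]].

Definition conj_chain (c : {set {group gT}}) (g : gT) : {set {group gT}} :=
  [set (H :^ g)%G | H in c].

Definition chain_orbit (c : {set {group gT}}) : {set {set {group gT}}} :=
  [set conj_chain c g | g in G].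

Definition orbit_chains (X : {set {group gT}}) : {set {set {set {group gT}}}} :=
  [set chain_orbit c | c in chains X].

Definition orbit_le : rel {set {set {group gT}}} :=
  fun O1 O2 => [exists c in O1, exists d in O2, c \subset d].

Definition orbit_space (X : {set {group gT}}) : topologicalType :=
  finspace orbit_le (orbit_chains X).

End ChainOrbits.

Definition Sp_space (gT : finGroupType) (p : nat) (G : {group gT}) : topologicalType :=
  finspace (@sub_le gT) (Sp p G).

Definition in_space (gT : finGroupType) (p : nat) (G : {group gT})
    (Y : {set {group gT}}) : set (Sp_space p G) :=
  [set x : Sp_space p G | val x \in Y].
Arguments in_space {gT} p G Y.
Arguments Sp_space {gT} p G.
Arguments orbit_space {gT} G X.

(* In a finite space, two order-preserving maps f <= g are homotopic, so a
   fence f_0 <= f_1 >= f_2 <= ... >= f_2m of such maps gives a homotopy from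
   f_0 to f_2m.  On X'/G these fences are induced by maps of chains that are
   G-equivariant and monotone up to conjugation.

   A_p(G)'/G and B_p(G)'/G are contractible through the cone
   c <= c :|: [set M] >= [set M_0], where M is a conjugate, containing the
   whole chain c, of M_0 = Omega_1(P), resp. M_0 = P, for a Sylow subgroup P.
   Such an M is abelian, hence lies in the centraliser C of c, and it is
   determined by a Sylow subgroup of C; by Sylow's theorem in C, M is unique
   up to an element of C, which fixes c.  For S_p(G)'/G one first pushes every
   chain into A_p(G) by replacing its members by their Omega_1, in increasing
   order of subgroups.

   Omega_1 is a monotone retraction of S_p(G) onto A_p(G) below the identity
   as soon as Omega_1(P) is elementary abelian for the Sylow subgroups P; this
   condition is also necessary, because the end map of a deformation is
   monotone.  When the Sylow subgroups are abelian, O_p(N_G(H)) is the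
   intersection of the Sylow subgroups containing H, which makes
   H |-> O_p(N_G(H)) a monotone retraction onto B_p(G) above the identity. *)

From HB Require Import structures.
From mathcomp Require Import boolp classical_sets topology reals.
From mathcomp Require Import Rstruct Rstruct_topology.
From mathcomp Require Import all_boot all_order all_algebra.
From mathcomp Require Import all_fingroup all_solvable.
From mathcomp Require Import lra zify.
From Stdlib Require Import Rdefinitions.
Import Order.TTheory GRing.Theory Num.Theory.

Set Implicit Arguments.
Unset Strict Implicit.
Unset Printing Implicit Defensive.

(** * Fences of maps of finite spaces *)

Section FiniteSpace.
Local Open Scope classical_set_scope.
Local Open Scope ring_scope.
Variables (T : finType) (le : rel T) (S : {set T}).
Local Notation X := (finspace le S).
Hypothesis le_refl : forall x : X, le (val x) (val x).
Hypothesis le_trans : forall x y z : X,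
  le (val x) (val y) -> le (val y) (val z) -> le (val x) (val z).

Definition down (x : X) : set X := [set y | le (val y) (val x)].

Lemma open_down x : open (down x).
Proof. by move=> a b /= lab lbx; exact: le_trans lab lbx. Qed.

Lemma nbhs_down (x : X) : nbhs x (down x).
Proof. by rewrite nbhsE; exists (down x) => //; split; [exact: open_down | exact: le_refl]. Qed.

Lemma nbhs_le (x : X) (W : set X) : nbhs x W -> forall y : X, le (val y) (val x) -> W y.
Proof. by rewrite nbhsE => -[B [oB Bx] BW] y lyx; apply: BW; exact: oB lyx Bx. Qed.

Lemma unit_itv1 : unit_itv 1.
Proof. by split; [exact: RIneq.Rle_0_1 | exact: RIneq.Rle_refl]. Qed.

Lemma homotopy_end_homo (H : X * R -> X) :
  {within [set: X] `*` unit_itv, continuous H} ->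
  {homo (fun x => H (x, 1)) : x y / le (val x) (val y)}.
Proof.
move=> cH x y lxy.
have Iy : ([set: X] `*` unit_itv) (y, 1) by split => //; exact: unit_itv1.
have : within ([set: X] `*` unit_itv) (nbhs ((y, 1) : X * R)) (H @^-1` down (H (y, 1))).
  by rewrite (nbhs_subspace_in Iy); exact/cH/nbhs_down.
rewrite /within /= => -[[P1 P2] [/= n1 n2] sub].
apply: (sub (x, 1)); last by split => //; exact: unit_itv1.
by split => /=; [exact: nbhs_le n1 _ lxy | exact: nbhs_singleton n2].
Qed.

Section Fence.
Variables (m : nat) (f : nat -> X -> X).
Hypothesis f_homo : forall i, {homo f i : x y / le (val x) (val y)}.
Hypothesis f_fence : forall j x, (j < m)%nat ->
  le (val (f j.*2 x)) (val (f j.*2.+1 x)) /\ le (val (f j.+1.*2 x)) (val (f j.*2.+1 x)).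

(* The fence f 0 <= f 1 >= f 2 <= ... >= f (2m) is traversed by cutting the
   unit interval at the times (j+1)/(m+1): on the open pieces the homotopy
   follows the maps f (2j), at the cut points the larger maps f (2j+1).  Thus
   every point has a neighbourhood on which the homotopy is below its value. *)
Definition fence_time (j : nat) : R := j.+1%:R / m.+1%:R.

Fixpoint fence_index (k j : nat) (t : R) : nat :=
  if k is k.+1 then
    if t < fence_time j then j.*2
    else if t == fence_time j then j.*2.+1 else fence_index k j.+1 t
  else j.*2.

Lemma fence_time_lt i j : (i < j)%nat -> fence_time i < fence_time j.
Proof. by move=> ij; rewrite ltr_pM2r ?invr_gt0 ?ltr0Sn // ltr_nat ltnS. Qed.

Lemma fence_time_gt0 j : 0 < fence_time j.
Proof. by rewrite mulr_gt0 ?invr_gt0 ?ltr0Sn. Qed.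

Lemma fence_time_lt1 j : (j < m)%nat -> fence_time j < 1.
Proof. by move=> jm; rewrite ltr_pdivrMr ?ltr0Sn // mul1r ltr_nat ltnS. Qed.

Lemma fence_index_lt k j t : t < fence_time j -> fence_index k j t = j.*2.
Proof. by case: k => //= k ->. Qed.

Lemma fence_index_gt k j t :
  (forall i, (j <= i < j + k)%nat -> fence_time i < t) -> fence_index k j t = (j + k).*2.
Proof.
elim: k j => [|k IH] j ht /=; first by rewrite addn0.
have jt : fence_time j < t by apply: ht; rewrite leqnn addnS ltnS leq_addr.
rewrite ltNge (ltW jt) /= gt_eqF // IH ?addSnnS // => i /andP[ji ik].
by apply: ht; rewrite ltnW //= -addSnnS.
Qed.

Lemma fence_index_near k j t : (j + k <= m)%nat -> exists2 e : R, 0 < e &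
  forall s, `|t - s| < e -> forall x,
    le (val (f (fence_index k j s) x)) (val (f (fence_index k j t) x)).
Proof.
elim: k j t => [|k IH] j t jk /=; first by exists 1 => // s _ x; exact: le_refl.
have jm : (j < m)%nat by rewrite -addn1 (leq_trans _ jk) // leq_add2l.
have [tj|jt] := ltrP t (fence_time j).
  exists (fence_time j - t); first by rewrite subr_gt0.
  move=> s; rewrite ltr_distlC => /andP[_ hs] x.
  have -> : s < fence_time j by lra.
  exact: le_refl.
have [tE|tN] := eqVneq t (fence_time j).
  exists (fence_time j.+1 - fence_time j); first by rewrite subr_gt0 fence_time_lt.
  move=> s; rewrite ltr_distlC => /andP[_ hs] x.
  have [le_ev le_odd] := f_fence x jm.
  have [//|js] := ltrP s (fence_time j).
  have [_|sN] := eqVneq s (fence_time j); first exact: le_refl.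
  by rewrite fence_index_lt //; lra.

have tgt : fence_time j < t by rewrite lt_neqAle eq_sym tN jt.
have [e e0 he] := IH j.+1 t ltac:(by rewrite addSnnS).
exists (Num.min e (t - fence_time j)); first by rewrite lt_min e0 subr_gt0.
move=> s; rewrite lt_min => /andP[hse]; rewrite ltr_distlC => /andP[hs _] x.
have sj : fence_time j < s by lra.
by rewrite ltNge (ltW sj) gt_eqF //=; exact: he.
Qed.

Definition fence_homotopy (z : X * R) : X := f (fence_index m 0 z.2) z.1.

Lemma fence_homotopy_continuous : continuous fence_homotopy.
Proof.
move=> [x t] W /= hW.
have [e e0 he] := @fence_index_near m 0 t (leqnn m).
exists (down x, ball t e); first by split; [exact: nbhs_down | exact: nbhsx_ballx].
move=> [y s] [/= yx ts]; apply: (nbhs_le hW).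
exact: le_trans (f_homo _ yx) (he _ ts _).
Qed.

Lemma fence_homotopy0 x : fence_homotopy (x, 0) = f 0 x.
Proof. by rewrite /fence_homotopy /= fence_index_lt ?fence_time_gt0. Qed.

Lemma fence_homotopy1 x : fence_homotopy (x, 1) = f m.*2 x.
Proof.
by rewrite /fence_homotopy /= fence_index_gt // => i /andP[_]; exact: fence_time_lt1.
Qed.

Hypothesis f0 : forall x, f 0 x = x.

Lemma fence_contractible x0 : (forall x, f m.*2 x = x0) -> contractible X.
Proof.
move=> fm; exists x0, fence_homotopy; split => x.
- exact/continuous_subspaceT/fence_homotopy_continuous.
- by rewrite fence_homotopy0.
- by rewrite fence_homotopy1.
Qed.

Lemma fence_sdr (A : set X) : (forall i a, A a -> f i a = a) ->
  (forall x, A (f m.*2 x)) -> strong_deformation_retract A.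
Proof.
move=> fA fm; exists fence_homotopy; split.
- exact/continuous_subspaceT/fence_homotopy_continuous.
- by move=> x; rewrite fence_homotopy0.
- by move=> x; rewrite fence_homotopy1.
- by move=> a t Aa _; exact: fA.
Qed.

End Fence.

Lemma retraction_sdr (A : set X) (r : X -> X) :
  {homo r : x y / le (val x) (val y)} ->
  (forall x, le (val (r x)) (val x)) \/ (forall x, le (val x) (val (r x))) ->
  (forall x, A (r x)) -> (forall a, A a -> r a = a) -> strong_deformation_retract A.
Proof.
move=> r_homo r_cmp rA r_id.
have [r_le|le_r] := r_cmp.
- apply: (@fence_sdr 1 (fun i => if (i <= 1)%nat then id else r)) => //.
  + by move=> [|[|i]] x y lxy //=; exact: r_homo.
  + by move=> [|//] x _; split; [exact: le_refl | exact: r_le].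
  + by move=> [|[|i]] a Aa //=; exact: r_id.
- apply: (@fence_sdr 1 (fun i => if i == 0 then id else r)) => //.
  + by move=> [|i] x y lxy //=; exact: r_homo.
  + by move=> [|//] x _; split; [exact: le_r | exact: le_refl].
  + by move=> [|i] a Aa //=; exact: r_id.
Qed.

End FiniteSpace.

(** * Fences on the orbit space of chains *)

Section ChainOrbits.
Local Open Scope group_scope.
Variables (gT : finGroupType) (G : {group gT}).
Implicit Types (X Y : {set {group gT}}) (c d : {set {group gT}}) (H K M : {group gT}).
Local Notation orbit := (chain_orbit G).
Local Notation chain_map := ({set {group gT}} -> {set {group gT}}).

Definition conj_invariant X := forall H g, H \in X -> g \in G -> (H :^ g)%G \in X.

Definition below c M := [forall H in c, H \subset M].

Lemma conj_chain1 c : conj_chain c 1 = c.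
Proof.
by rewrite /conj_chain (eq_imset (g := id)) ?imset_id // => H; apply: val_inj; rewrite /= conjsg1.
Qed.

Lemma conj_chainM c g h : conj_chain (conj_chain c g) h = conj_chain c (g * h).
Proof.
by rewrite /conj_chain -imset_comp; apply: eq_imset => H; apply: val_inj; rewrite /= conjsgM.
Qed.

Lemma conj_chainU c d g : conj_chain (c :|: d) g = conj_chain c g :|: conj_chain d g.
Proof. exact: imsetU. Qed.

Lemma conj_chain_set1 M g : conj_chain [set M] g = [set (M :^ g)%G].
Proof. exact: imset_set1. Qed.

Lemma conj_chain_cent c y : y \in 'C(\bigcup_(H in c) H) -> conj_chain c y = c.
Proof.
move=> cy; rewrite /conj_chain (eq_in_imset (g := id)) ?imset_id // => H Hc.
apply: val_inj => /=; apply/normP.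
apply: (subsetP (cent_sub H)).
by apply: subsetP cy; apply/centS/(bigcup_max H).
Qed.

Lemma below_conj c M g : below c M -> below (conj_chain c g) (M :^ g)%G.
Proof. by move/forall_inP=> cM; apply/forall_inP => _ /imsetP[H Hc ->]; rewrite conjSg cM. Qed.

Lemma belowS c d M : c \subset d -> below d M -> below c M.
Proof. by move=> cd /forall_inP dM; apply/forall_inP => H /(subsetP cd)/dM. Qed.

Lemma chainsP X c : reflect [/\ c != set0, c \subset X &
    {in c &, forall H K, (H \subset K) || (K \subset H)}] (c \in chains X).
Proof.
rewrite inE; apply: (iffP and3P) => -[c0 cX cc]; split=> //.
  by move=> H K Hc Kc; move/forall_inP: cc => /(_ H Hc)/forall_inP; apply.
by apply/forall_inP => H Hc; apply/forall_inP => K Kc; apply: cc.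
Qed.

Lemma chains1 X H : H \in X -> [set H] \in chains X.
Proof.
move=> HX; apply/chainsP; split; first by apply/set0Pn; exists H; rewrite inE.
  by rewrite sub1set.
by move=> _ _ /set1P-> /set1P->; rewrite subxx.
Qed.

Lemma chainsS X Y c : X \subset Y -> c \in chains X -> c \in chains Y.
Proof. by move=> XY /chainsP[c0 cX cc]; apply/chainsP; rewrite (subset_trans cX XY). Qed.

Lemma chains_in X Y c : c \in chains X -> c \subset Y -> c \in chains Y.
Proof. by case/chainsP=> c0 _ cc cY; apply/chainsP. Qed.

Lemma chains_subset X c d : d != set0 -> d \subset c -> c \in chains X -> d \in chains X.
Proof.
move=> d0 dc /chainsP[_ cX cc]; apply/chainsP; split=> //; first exact: subset_trans cX.
by move=> H K /(subsetP dc) Hc /(subsetP dc) Kc; exact: cc.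
Qed.

Lemma chains_conj X c g : conj_invariant X -> g \in G -> c \in chains X ->
  conj_chain c g \in chains X.
Proof.
move=> XJ Gg /chainsP[c0 cX cc]; apply/chainsP; split.
- by apply: contra c0; rewrite imset_eq0.
- by apply/subsetP => _ /imsetP[H Hc ->]; apply: XJ (subsetP cX H Hc) Gg.
- by move=> _ _ /imsetP[H Hc ->] /imsetP[K Kc ->]; rewrite !conjSg cc.
Qed.

Lemma chain_max X c : c \in chains X -> exists2 K, K \in c & below c K.
Proof.
case/chainsP => /set0Pn[H0 H0c] _ cc.
have [K Kc maxK] := arg_maxnP (fun H : {group gT} => #|H|) H0c.
exists K => //; apply/forall_inP => H Hc; have /orP[//|sKH] := cc H K Hc Kc.
by have /eqP-> : K :==: H by rewrite eqEcard sKH; exact: maxK.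
Qed.

Lemma chain_orbit_conj c g : g \in G -> orbit (conj_chain c g) = orbit c.
Proof.
move=> Gg; apply/setP => d; apply/imsetP/imsetP => -[h Gh ->].
  by exists (g * h); rewrite ?groupM // conj_chainM.
by exists (g^-1 * h); rewrite ?groupM ?groupV // conj_chainM mulKVg.
Qed.

Lemma orbit_leP c d :
  reflect (exists2 g, g \in G & conj_chain c g \subset d) (orbit_le (orbit c) (orbit d)).
Proof.
apply: (iffP exists_inP) => [[_ /imsetP[g Gg ->] /exists_inP[_ /imsetP[h Gh ->] cd]]|].
  exists (g * h^-1); first by rewrite groupM ?groupV.
  by rewrite -conj_chainM -(conj_chain1 d) -(mulgV h) -conj_chainM imsetS.
case=> g Gg cd; exists (conj_chain c g); first exact: imset_f.
by apply/exists_inP; exists d => //; apply/imsetP; exists 1; rewrite ?conj_chain1.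
Qed.

Lemma orbit_le_sub c d : c \subset d -> orbit_le (orbit c) (orbit d).
Proof. by move=> cd; apply/orbit_leP; exists 1; rewrite ?conj_chain1. Qed.

Lemma orbit_le_trans c d e : orbit_le (orbit c) (orbit d) ->
  orbit_le (orbit d) (orbit e) -> orbit_le (orbit c) (orbit e).
Proof.
case/orbit_leP=> g Gg cd /orbit_leP[h Gh de]; apply/orbit_leP.
by exists (g * h); rewrite ?groupM // -conj_chainM (subset_trans (imsetS _ cd)).
Qed.

Definition orbit_point X c (cX : c \in chains X) : orbit_space G X :=
  exist (fun O => O \in orbit_chains G X) (orbit c) (imset_f _ cX).

Definition orbit_rep X (O : {set {set {group gT}}}) : {set {group gT}} :=
  odflt set0 [pick c in chains X | orbit c == O].

Lemma orbit_repP X O : O \in orbit_chains G X ->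
  orbit_rep X O \in chains X /\ orbit (orbit_rep X O) = O.
Proof.
case/imsetP=> c cX ->; rewrite /orbit_rep.
by case: pickP => [d /andP[dX /eqP]|/(_ c)] //; rewrite cX eqxx.
Qed.

(* Exactly what is needed for the maps Phi i to induce a fence of
   order-preserving maps on X'/G. *)
Definition chain_fence X m (Phi : nat -> chain_map) :=
  [/\ forall i, {in chains X, forall c, Phi i c \in chains X},
      forall i g, g \in G ->
        {in chains X, forall c, orbit (Phi i (conj_chain c g)) = orbit (Phi i c)},
      forall i, {in chains X &, forall c d,
        c \subset d -> orbit_le (orbit (Phi i c)) (orbit (Phi i d))} &
      forall j, (j < m)%nat -> {in chains X, forall c,
        orbit_le (orbit (Phi j.*2 c)) (orbit (Phi j.*2.+1 c)) /\
        orbit_le (orbit (Phi j.+1.*2 c)) (orbit (Phi j.*2.+1 c))}].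

Definition fence_cat m (Phi Psi : nat -> chain_map) i :=
  if (i < m.*2)%nat then Phi i else Psi (i - m.*2)%nat.

Lemma fence_catl m Phi Psi i c : (i <= m.*2)%nat -> Phi m.*2 c = Psi 0%nat c ->
  fence_cat m Phi Psi i c = Phi i c.
Proof. by rewrite /fence_cat leq_eqVlt => /orP[/eqP->|->] // ->; rewrite ltnn subnn. Qed.

Lemma fence_catr m Phi Psi i c : (m.*2 <= i)%nat ->
  fence_cat m Phi Psi i c = Psi (i - m.*2)%nat c.
Proof. by rewrite /fence_cat ltnNge => ->. Qed.

Lemma chain_fence_cat X m n Phi Psi : chain_fence X m Phi -> chain_fence X n Psi ->
  {in chains X, Phi m.*2 =1 Psi 0%nat} -> chain_fence X (m + n) (fence_cat m Phi Psi).
Proof.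
move=> [PhiX PhiJ PhiS Phi_fence] [PsiX PsiJ PsiS Psi_fence] seam.
split=> [i|i g Gg|i|j jmn c cX].
- by rewrite /fence_cat; case: ifP => _; [exact: PhiX | exact: PsiX].
- by rewrite /fence_cat; case: ifP => _; [exact: PhiJ | exact: PsiJ].
- by rewrite /fence_cat; case: ifP => _; [exact: PhiS | exact: PsiS].
have [jm|mj] := ltnP j m.
  rewrite !fence_catl ?seam ?leq_double ?ltn_double ?(ltnW jm) //; exact: Phi_fence.
have m2j : (m.*2 <= j.*2)%nat by rewrite leq_double.
rewrite !fence_catr ?(leqW m2j) ?leq_double ?(leqW mj) // subSn // -!doubleB subSn //.
by apply: Psi_fence cX; lia.
Qed.

Lemma chain_fence_comp X Y n Psi (rho : chain_map) :
  Y \subset X -> chain_fence Y n Psi -> {in chains X, forall c, rho c \in chains Y} ->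
  (forall c g, g \in G -> rho (conj_chain c g) = conj_chain (rho c) g) ->
  {homo rho : c d / c \subset d} -> chain_fence X n (fun i c => Psi i (rho c)).
Proof.
move=> YX [PsiY PsiJ PsiS Psi_fence] rhoY rhoJ rho_homo.
split=> [i c cX|i g Gg c cX|i c d cX dX cd|j jn c cX].
- exact/(chainsS YX)/PsiY/rhoY.
- by rewrite rhoJ //; apply/PsiJ/rhoY.
- by apply: PsiS; rewrite ?rhoY ?rho_homo.
- exact/Psi_fence/rhoY.
Qed.

Lemma chain_fence_contractible X m Phi c0 : conj_invariant X -> chain_fence X m Phi ->
  {in chains X, Phi 0%nat =1 id} -> c0 \in chains X ->
  {in chains X, forall c, orbit (Phi m.*2 c) = orbit c0} -> contractible (orbit_space G X).
Proof.
move=> XJ [PhiX PhiJ PhiS Phi_fence] Phi0 c0X Phim.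
pose Y := finspace (@orbit_le gT) (orbit_chains G X).
have repX (x : Y) := (orbit_repP (valP x)).1.
have repE (x : Y) := (orbit_repP (valP x)).2.
pose lift i (x : Y) : Y := orbit_point (PhiX i _ (repX x)).
have Y_refl (x : Y) : orbit_le (val x) (val x) by rewrite -repE orbit_le_sub.
have Y_trans (x y z : Y) : orbit_le (val x) (val y) -> orbit_le (val y) (val z) ->
    orbit_le (val x) (val z).
  by rewrite -(repE x) -(repE y) -(repE z); exact: orbit_le_trans.
apply: (@fence_contractible _ _ _ Y_refl Y_trans m lift _ _ _ (orbit_point c0X)).
- move=> i x y; rewrite /= -{1}(repE x) -{1}(repE y) => /orbit_leP[g Gg sub].
  by rewrite -(PhiJ i g Gg _ (repX x)) PhiS ?chains_conj ?repX.
- by move=> j x jm; exact: Phi_fence (repX x).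
- by move=> x; apply: val_inj; rewrite /= Phi0 ?repE ?repX.
- by move=> x; apply: val_inj; rewrite /= Phim ?repX.
Qed.

End ChainOrbits.

Section Cone.
Local Open Scope group_scope.
Variables (gT : finGroupType) (G : {group gT}) (X : {set {group gT}}) (M0 : {group gT}).
Implicit Types (c d : {set {group gT}}) (H M : {group gT}).
Local Notation orbit := (chain_orbit G).

Definition conj_class := [set (M0 :^ g)%G | g in G].

Hypothesis XJ : conj_invariant G X.
Hypothesis M0X : M0 \in X.
Hypothesis below_class : {in chains X, forall c, exists2 M, M \in conj_class & below c M}.
Hypothesis class_fusion : {in chains X, forall c, {in conj_class &, forall M1 M2,
  below c M1 -> below c M2 -> exists2 y, y \in 'C_G(\bigcup_(H in c) H) & (M1 :^ y)%G = M2}}.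

(* Any two tops of c are conjugate under the centraliser of c, which fixes c,
   so the orbit of add_top c does not depend on the top picked. *)
Definition add_top c := c :|: [set odflt M0 [pick M in conj_class | below c M]].

Definition cone (i : nat) c :=
  if i == 0%nat then c else if i == 1%nat then add_top c else [set M0].

Lemma conj_class_conj M g : M \in conj_class -> g \in G -> (M :^ g)%G \in conj_class.
Proof.
case/imsetP=> h Gh -> Gg; apply/imsetP; exists (h * g); first exact: groupM.
by apply: val_inj; rewrite /= conjsgM.
Qed.

Lemma conj_class_sub M : M \in conj_class -> M \in X.
Proof. by case/imsetP=> g Gg ->; exact: XJ. Qed.

Lemma add_topP c : c \in chains X ->
  exists2 M, M \in conj_class & below c M /\ add_top c = c :|: [set M].
Proof.
move=> cX; rewrite /add_top; case: pickP => [M /andP[MC cM]|none]; first by exists M.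
by have [M MC cM] := below_class cX; have := none M; rewrite MC cM.
Qed.

Lemma add_top_chain c : c \in chains X -> add_top c \in chains X.
Proof.
move=> cX; have [M MC [/forall_inP cM ->]] := add_topP cX.
have /chainsP[c0 sub_cX cc] := cX; apply/chainsP; split.
- by apply: contra c0; rewrite setU_eq0 => /andP[].
- by rewrite subUset sub_cX sub1set conj_class_sub.
- move=> H K; rewrite !inE => /orP[Hc|/eqP->] /orP[Kc|/eqP->].
  + exact: cc.
  + by rewrite cM.
  + by rewrite cM ?orbT.
  + by rewrite subxx.
Qed.

Lemma orbit_add_top c M : c \in chains X -> M \in conj_class -> below c M ->
  orbit (add_top c) = orbit (c :|: [set M]).
Proof.
move=> cX MC cM; have [M' M'C [cM' ->]] := add_topP cX.
have [y /setIP[Gy cy] <-] := class_fusion cX M'C MC cM' cM.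
by rewrite -(chain_orbit_conj _ Gy) conj_chainU conj_chain_set1 conj_chain_cent.
Qed.

Lemma cone_chain_fence : chain_fence G X 1 cone.
Proof.
rewrite /cone; split=> [[|[|i]] c cX|[|[|i]] g Gg c cX|[|[|i]] c d cX dX cd|[|//] _ c cX] /=.
- by [].
- exact: add_top_chain.
- exact: chains1.
- exact: chain_orbit_conj.
- have [M MC [cM ->]] := add_topP cX.
  rewrite (orbit_add_top (chains_conj XJ Gg cX) (conj_class_conj MC Gg) (below_conj g cM)).
  by rewrite -[RHS](chain_orbit_conj _ Gg) conj_chainU conj_chain_set1.
- by [].
- exact: orbit_le_sub.
- have [M MC [dM ->]] := add_topP dX.
  by rewrite (orbit_add_top cX MC (belowS cd dM)) orbit_le_sub ?setSU.
- exact: orbit_le_sub.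
- split; first by rewrite orbit_le_sub ?subsetUl.
  have [M /imsetP[g Gg ->] [_ ->]] := add_topP cX.
  by apply/orbit_leP; exists g; rewrite // conj_chain_set1 subsetUr.
Qed.

Lemma cone_contractible : contractible (orbit_space G X).
Proof.
apply: (chain_fence_contractible XJ cone_chain_fence (c0 := [set M0])) => //.
exact: chains1.
Qed.

End Cone.

Section Levels.
Local Open Scope group_scope.
Variables (gT : finGroupType) (G : {group gT}) (X : {set {group gT}}).
Variable r : {group gT} -> {group gT}.
Implicit Types (c d : {set {group gT}}) (H K : {group gT}).
Hypothesis rX : {in X, forall H, r H \in X}.
Hypothesis r_sub : {in X, forall H, r H \subset H}.
Hypothesis r_homo : {in X &, forall H K, H \subset K -> r H \subset r K}.
Hypothesis rJ : forall H g, g \in G -> r (H :^ g)%G = (r H :^ g)%G.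

(* The union of two consecutive stages is still a chain: the only new
   comparison is between H and r K for members H \subset K of equal order,
   and then H = K. *)
Definition level_map (j : nat) H := if (#|H| < j)%nat then r H else H.

Definition level j c := [set level_map j H | H in c].

Definition level_fence (i : nat) c :=
  if odd i then level i./2.+1 c :|: level i./2 c else level i./2 c.

Lemma level_mapX j H : H \in X -> level_map j H \in X.
Proof. by rewrite /level_map; case: ifP => // _; exact: rX. Qed.

Lemma level_map_sub j H : H \in X -> level_map j H \subset H.
Proof. by rewrite /level_map; case: ifP => // _; exact: r_sub. Qed.

Lemma level_mapJ j H g : g \in G -> level_map j (H :^ g)%G = (level_map j H :^ g)%G.
Proof. by move=> Gg; rewrite /level_map /= cardJg; case: ifP => // _; exact: rJ. Qed.

Lemma level_map_comparable a b H K : H \in X -> K \in X -> H \subset K ->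
  (a <= b.+1)%nat -> (b <= a.+1)%nat ->
  (level_map a H \subset level_map b K) || (level_map b K \subset level_map a H).
Proof.
move=> HX KX sHK ab ba; rewrite /level_map.
have [Kb|bK] := ltnP #|K| b; last by rewrite (subset_trans (level_map_sub a HX) sHK).
have [Ha|aH] := ltnP #|H| a; first by rewrite r_homo.
have /eqP-> : H :==: K by rewrite eqEcard sHK; lia.
by rewrite r_sub ?orbT.
Qed.

Lemma levelJ j c g : g \in G -> level j (conj_chain c g) = conj_chain (level j c) g.
Proof.
by move=> Gg; rewrite /level /conj_chain -!imset_comp; apply: eq_imset => H /=; exact: level_mapJ.
Qed.

Lemma levelS j c d : c \subset d -> level j c \subset level j d.
Proof. exact: imsetS. Qed.

Lemma level_step_chain j c : c \in chains X -> level j.+1 c :|: level j c \in chains X.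
Proof.
case/chainsP=> c0 cX cc.
have mem_step K : K \in level j.+1 c :|: level j c ->
    exists2 a, (j <= a <= j.+1)%nat & exists2 H, H \in c & K = level_map a H.
  rewrite inE => /orP[] /imsetP[H Hc ->]; [exists j.+1 | exists j];
    by rewrite ?leqnn ?leqnSn //; exists H.
apply/chainsP; split.
- by rewrite setU_eq0 negb_and imset_eq0 c0.
- by apply/subsetP => K /mem_step[a _ [H Hc ->]]; apply: level_mapX; exact: (subsetP cX).
move=> _ _ /mem_step[a ja [H Hc ->]] /mem_step[b jb [K Kc ->]].
have [HX KX] := (subsetP cX H Hc, subsetP cX K Kc).
have [sHK|sKH] := orP (cc H K Hc Kc); first by apply: level_map_comparable => //; lia.
by rewrite orbC; apply: level_map_comparable => //; lia.
Qed.

Lemma level_chain j c : c \in chains X -> level j c \in chains X.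
Proof.
move=> cX; apply: chains_subset (subsetUr _ _) (level_step_chain j cX).
by case/chainsP: cX => c0 _ _; rewrite imset_eq0.
Qed.

Lemma level0 c : level 0 c = c.
Proof. by rewrite /level (eq_imset (g := id)) ?imset_id. Qed.

Lemma level_end c : level #|gT|.+1 c = [set r H | H in c].
Proof. by apply: eq_imset => H; rewrite /level_map ltnS max_card. Qed.

Lemma level_fence_double j c : level_fence j.*2 c = level j c.
Proof. by rewrite /level_fence odd_double doubleK. Qed.

Lemma level_chain_fence : chain_fence G X #|gT|.+1 level_fence.
Proof.
rewrite /level_fence; split=> [i c cX|i g Gg c cX|i c d cX dX cd|j _ c cX].
- by case: ifP => _; [exact: level_step_chain | exact: level_chain].
- by case: ifP => _; rewrite !levelJ // -?conj_chainU chain_orbit_conj.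
- by apply: orbit_le_sub; case: ifP => _; rewrite ?setUSS ?levelS.
rewrite !odd_double /= odd_double !doubleK uphalf_double.
by split; apply: orbit_le_sub; rewrite ?subsetUl ?subsetUr.
Qed.

End Levels.

(** * Posets of p-subgroups *)

Section SubgroupPosets.
Local Open Scope group_scope.
Variables (gT : finGroupType) (G : {group gT}) (p : nat).
Implicit Types (H K M P : {group gT}) (c : {set {group gT}}).

Lemma SpP H : reflect [/\ H \subset G, p.-group H & H :!=: 1] (H \in Sp p G).
Proof. by rewrite inE; apply: and3P. Qed.

Lemma ApP H : reflect [/\ H \subset G, p.-abelem H & H :!=: 1] (H \in Ap p G).
Proof. by rewrite inE; apply: and3P. Qed.

Lemma Ap_sub_Sp : Ap p G \subset Sp p G.
Proof. by apply/subsetP => H /ApP[sHG /abelem_pgroup pH ntH]; apply/SpP. Qed.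

Lemma Bp_sub_Sp : Bp p G \subset Sp p G.
Proof. by apply/subsetP => H; rewrite inE => /andP[]. Qed.

Lemma conj_invariant_Sp : conj_invariant G (Sp p G).
Proof.
by move=> H g /SpP[sHG pH ntH] Gg; apply/SpP; rewrite conj_subG //= pgroupJ conjsg_eq1.
Qed.

Lemma conj_invariant_Ap : conj_invariant G (Ap p G).
Proof.
by move=> H g /ApP[sHG pH ntH] Gg; apply/ApP; rewrite conj_subG //= abelemJ conjsg_eq1.
Qed.

Lemma conj_invariant_Bp : conj_invariant G (Bp p G).
Proof.
move=> H g /setIdP[SpH /eqP defH] Gg; apply/setIdP; split; first exact: conj_invariant_Sp.
by rewrite /= normJ -{1}(conjGid Gg) -conjIg pcoreJ -defH.
Qed.

Lemma Sylow_Sp P : p.-Sylow(G) P -> P :!=: 1 -> P \in Sp p G.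
Proof. by move=> sylP ntP; apply/SpP; rewrite (pHall_sub sylP) (pHall_pgroup sylP). Qed.

Lemma below_cent c M : M \subset G -> abelian M -> below c M ->
  M \subset 'C_G(\bigcup_(H in c) H).
Proof.
move=> sMG cMM /forall_inP cM; rewrite subsetI sMG sub_abelian_cent //.
exact/bigcupsP.
Qed.

Lemma below_Sylow_conj P c : p.-Sylow(G) P -> c \in chains (Sp p G) ->
  exists2 g, g \in G & below c (P :^ g)%G.
Proof.
move=> sylP cS; have [K Kc cK] := chain_max cS.
have /SpP[sKG pK _] : K \in Sp p G by case/chainsP: cS => _ /subsetP/(_ K Kc).
have [g Gg sKPg] := Sylow_subJ sylP sKG pK.
by exists g => //; apply/forall_inP => H /(forall_inP cK) sHK; exact: subset_trans sHK sKPg.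
Qed.

Lemma Sp_retraction_sdr (Y : {set {group gT}}) (r : {group gT} -> {group gT}) :
  {in Sp p G, forall H, r H \in Y} -> Y \subset Sp p G -> {in Y, forall H, r H = H} ->
  {in Sp p G &, forall H K, H \subset K -> r H \subset r K} ->
  {in Sp p G, forall H, r H \subset H} \/ {in Sp p G, forall H, H \subset r H} ->
  strong_deformation_retract (in_space p G Y).
Proof.
move=> rY YS r_id r_homo r_cmp.
pose rS (x : Sp_space p G) : Sp_space p G :=
  exist (fun H => H \in Sp p G) _ (subsetP YS _ (rY _ (valP x))).
apply: (@retraction_sdr _ _ _ _ _ _ rS).
- by move=> x; exact: subxx.
- by move=> x y z; exact: subset_trans.
- by move=> x y; apply: r_homo; exact: valP.
- by case: r_cmp => [r_le|le_r]; [left|right] => x; [exact: r_le (valP x) | exact: le_r (valP x)].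
- by move=> x; exact: rY (valP x).
- by move=> x Yx; apply: val_inj; exact: r_id.
Qed.

End SubgroupPosets.

Section Omega1.
Local Open Scope group_scope.
Variables (gT : finGroupType) (G : {group gT}) (p : nat).
Implicit Types (E H K M P S : {group gT}) (c : {set {group gT}}).
Hypothesis Ohm1_Syl : forall P, P \in 'Syl_p(G) -> p.-abelem 'Ohm_1(P).

Definition Ohm1G H : {group gT} := ('Ohm_1(H))%G.

Lemma Ohm1G_conj H g : Ohm1G (H :^ g)%G = (Ohm1G H :^ g)%G.
Proof. by apply: val_inj; exact: OhmJ. Qed.

Lemma abelem_Ohm1 H : H \subset G -> p.-group H -> p.-abelem 'Ohm_1(H).
Proof.
move=> sHG pH; have [P sylP sHP] := Sylow_superset sHG pH.
by apply: abelemS (OhmS 1 sHP) (Ohm1_Syl _); rewrite inE.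
Qed.

Lemma Ohm1_Ap H : H \in Sp p G -> Ohm1G H \in Ap p G.
Proof.
case/SpP=> sHG pH ntH; apply/ApP; split; last by rewrite /= Ohm1_eq1.
  exact: subset_trans (Ohm_sub 1 H) sHG.
exact: abelem_Ohm1.
Qed.

Lemma Ap_sdr : strong_deformation_retract (in_space p G (Ap p G)).
Proof.
apply: Sp_retraction_sdr.
- exact: Ohm1_Ap.
- exact: Ap_sub_Sp.
- by move=> E /ApP[_ abE _]; apply: val_inj => /=; exact: Ohm1_id abE.
- by move=> H K _ _; exact: OhmS.
- by left=> H _; exact: Ohm_sub.
Qed.

Variable P0 : {group gT}.
Hypothesis sylP0 : p.-Sylow(G) P0.
Hypothesis ntP0 : P0 :!=: 1.
Local Notation M0 := ('Ohm_1(P0))%G.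

Lemma Ohm1_classP M : M \in conj_class G M0 -> M \subset G /\ p.-abelem M.
Proof.
case/imsetP=> g Gg ->; rewrite /= -OhmJ abelem_Ohm1 ?pgroupJ ?(pHall_pgroup sylP0) //.
  by rewrite (subset_trans (Ohm_sub 1 _)) ?conj_subG ?(pHall_sub sylP0).
by rewrite conj_subG ?(pHall_sub sylP0).
Qed.

Lemma Ohm1_class_Sylow M S : M \in conj_class G M0 ->
  S \subset G -> p.-group S -> M \subset S -> 'Ohm_1(S) = M.
Proof.
move=> MC sSG pS sMS; have [_ abM] := Ohm1_classP MC.
have [h Gh sSPh] := Sylow_subJ sylP0 sSG pS.
apply/eqP; rewrite eq_sym eqEcard -{1}(Ohm1_id abM) OhmS //=.
case/imsetP: MC => g Gg ->.
by rewrite (leq_trans (subset_leq_card (OhmS 1 sSPh))) // OhmJ !cardJg.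
Qed.

Lemma below_Ohm1_class :
  {in chains (Ap p G), forall c, exists2 M, M \in conj_class G M0 & below c M}.
Proof.
move=> c cA; have [g Gg cP] := below_Sylow_conj sylP0 (chainsS (Ap_sub_Sp G p) cA).
exists (M0 :^ g)%G; first exact: imset_f.
apply/forall_inP => H Hc; have /ApP[_ abH _] : H \in Ap p G.
  by case/chainsP: cA => _ /subsetP/(_ H Hc).
by rewrite /= -OhmJ -(Ohm1_id abH) OhmS // (forall_inP cP).
Qed.

Lemma Ohm1_class_fusion : {in chains (Ap p G), forall c, {in conj_class G M0 &,
  forall M1 M2, below c M1 -> below c M2 ->
    exists2 y, y \in 'C_G(\bigcup_(H in c) H) & (M1 :^ y)%G = M2}}.
Proof.
move=> c cA M1 M2 M1C M2C cM1 cM2; set C := 'C_G(_).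
have Sylow_Ohm1 M : M \in conj_class G M0 -> below c M ->
    exists2 S : {group gT}, p.-Sylow(C) S & 'Ohm_1(S) = M.
  move=> MC cM; have [sMG abM] := Ohm1_classP MC.
  have sMC := below_cent sMG (abelem_abelian abM) cM.
  have [S sylS sMS] := Sylow_superset sMC (abelem_pgroup abM).
  exists S => //; apply: Ohm1_class_Sylow MC _ (pHall_pgroup sylS) sMS.
  exact: subset_trans (pHall_sub sylS) (subsetIl _ _).
have [S1 sylS1 defM1] := Sylow_Ohm1 M1 M1C cM1.
have [S2 sylS2 defM2] := Sylow_Ohm1 M2 M2C cM2.
have [y Cy defS2] := Sylow_trans sylS1 sylS2.
by exists y => //; apply: val_inj; rewrite /= -defM1 -defM2 -OhmJ defS2.
Qed.

Lemma Ohm1_P0_Ap : M0 \in Ap p G.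
Proof. exact/Ohm1_Ap/Sylow_Sp. Qed.

Lemma Ap_contractible : contractible (orbit_space G (Ap p G)).
Proof.
exact: cone_contractible (@conj_invariant_Ap _ G p) Ohm1_P0_Ap below_Ohm1_class Ohm1_class_fusion.
Qed.

Lemma Ohm1_level_fence : chain_fence G (Sp p G) #|gT|.+1 (level_fence Ohm1G).
Proof.
apply: level_chain_fence => [H /Ohm1_Ap/(subsetP (Ap_sub_Sp G p)) //|H _|H K _ _|H g _].
- exact: Ohm_sub.
- exact: OhmS.
- exact: Ohm1G_conj.
Qed.

Lemma Sp_contractible : contractible (orbit_space G (Sp p G)).
Proof.
pose top := #|gT|.+1; have levels := Ohm1_level_fence; have [levelsS _ _ _] := levels.
have top_Ap : {in chains (Sp p G), forall c, level Ohm1G top c \in chains (Ap p G)}.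
  move=> c cS; rewrite -level_fence_double; apply: chains_in (levelsS _ c cS) _.
  rewrite level_fence_double level_end; apply/subsetP => _ /imsetP[H Hc ->].
  by apply: Ohm1_Ap; case/chainsP: cS => _ /subsetP/(_ H Hc).
have cone_Ap := chain_fence_comp (Ap_sub_Sp G p)
  (cone_chain_fence (@conj_invariant_Ap _ G p) Ohm1_P0_Ap below_Ohm1_class Ohm1_class_fusion)
  top_Ap (fun c g Gg => levelJ (fun H g _ => Ohm1G_conj H g) top c Gg) (@levelS _ Ohm1G top).
have seam : {in chains (Sp p G), level_fence Ohm1G top.*2 =1 cone G M0 0 \o level Ohm1G top}.
  by move=> c _; rewrite level_fence_double.
apply: (chain_fence_contractible (@conj_invariant_Sp _ G p) (chain_fence_cat levels cone_Ap seam)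
  (c0 := [set M0])) => [c cS||c cS].
- by rewrite fence_catl ?seam // /level_fence /= level0.
- exact/chains1/(subsetP (Ap_sub_Sp G p))/Ohm1_P0_Ap.
- by rewrite fence_catr ?leq_double ?leq_addr // doubleD addKn.
Qed.

End Omega1.

Section AbelianSylow.
Local Open Scope group_scope.
Variables (gT : finGroupType) (G : {group gT}) (p : nat).
Implicit Types (H K M P : {group gT}) (c : {set {group gT}}).
Hypothesis Syl_abelian : forall P, P \in 'Syl_p(G) -> abelian P.

Lemma abelem_Ohm1_Syl P : P \in 'Syl_p(G) -> p.-abelem 'Ohm_1(P).
Proof.
by move=> sylP; rewrite Ohm1_abelem ?Syl_abelian //; move: sylP; rewrite inE => /pHall_pgroup.
Qed.

Definition Syl_cap H : {group gT} := (\bigcap_(P in 'Syl_p(G) | H \subset P) P)%G.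

Lemma Syl_sub_norm H P : p.-Sylow(G) P -> H \subset P -> P \subset 'N_G(H).
Proof.
move=> sylP sHP; rewrite subsetI (pHall_sub sylP) (subset_trans _ (cent_sub H)) //.
by rewrite sub_abelian_cent // Syl_abelian ?inE.
Qed.

Lemma Syl_cap_sub H P : p.-Sylow(G) P -> H \subset P -> Syl_cap H \subset P.
Proof. by move=> sylP sHP; apply: (bigcap_inf P); rewrite inE sylP. Qed.

Lemma Syl_cap_normal H : H \subset G -> p.-group H ->
  p.-group (Syl_cap H) /\ Syl_cap H <| 'N_G(H).
Proof.
move=> sHG pH; have [P sylP sHP] := Sylow_superset sHG pH.
have sCP := Syl_cap_sub sylP sHP.
split; first exact: pgroupS sCP (pHall_pgroup sylP).
rewrite /normal (subset_trans sCP (Syl_sub_norm sylP sHP)).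
apply/subsetP => g /setIP[Gg /normP nHg]; apply/normP/eqP.
rewrite eqEcard cardJg leqnn andbT; apply/bigcapsP => Q /andP[sylQ sHQ].
rewrite sub_conjg; apply: Syl_cap_sub; first by rewrite inE in sylQ; rewrite pHallJ ?groupV.
by rewrite /= -sub_conjg nHg.
Qed.

Lemma pcore_norm_Syl_cap H : H \subset G -> p.-group H -> 'O_p('N_G(H)) = Syl_cap H.
Proof.
move=> sHG pH; have [pC nC] := Syl_cap_normal sHG pH.
apply/eqP; rewrite eqEsubset pcore_max // andbT.
apply/bigcapsP => P /andP[sylP sHP]; rewrite inE in sylP.
apply: pcore_sub_Hall; apply: pHall_subl (Syl_sub_norm sylP sHP) (subsetIl _ _) sylP.
Qed.

Definition pradical H : {group gT} := ('O_p('N_G(H)))%G.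

Lemma sub_pradical H : H \subset G -> p.-group H -> H \subset pradical H.
Proof. by move=> sHG pH; exact: pcore_max pH (normalSG sHG). Qed.

Lemma pradical_Sp H : H \in Sp p G -> pradical H \in Sp p G.
Proof.
case/SpP=> sHG pH ntH; apply/SpP; split.
- exact: subset_trans (pcore_sub _ _) (subsetIl _ _).
- exact: pcore_pgroup.
- by apply: contraNneq ntH => defR; rewrite -subG1 -defR sub_pradical.
Qed.

Lemma Syl_cap_pradical H : H \in Sp p G -> Syl_cap (pradical H) = Syl_cap H.
Proof.
case/SpP=> sHG pH _; apply: val_inj; apply: eq_bigl => P; rewrite andbC.
have [sylP|] := boolP (P \in 'Syl_p(G)); rewrite ?andbF //= andbT; rewrite inE in sylP.
apply/idP/idP => [sRP | sHP]; first exact: subset_trans (sub_pradical sHG pH) sRP.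
by rewrite /= pcore_norm_Syl_cap // Syl_cap_sub.
Qed.

Lemma pradical_Bp H : H \in Sp p G -> pradical H \in Bp p G.
Proof.
move=> SH; have /SpP[sRG pR _] := pradical_Sp SH; have /SpP[sHG pH _] := SH.
apply/setIdP; split; first exact: pradical_Sp.
by rewrite /= (pcore_norm_Syl_cap sRG pR) Syl_cap_pradical // -pcore_norm_Syl_cap.
Qed.

Lemma pradical_id H : H \in Bp p G -> pradical H = H.
Proof. by case/setIdP=> _ /eqP defH; apply: val_inj; rewrite /= -defH. Qed.

Lemma pradical_homo : {in Sp p G &, forall H K, H \subset K -> pradical H \subset pradical K}.
Proof.
move=> H K /SpP[sHG pH _] /SpP[sKG pK _] sHK.
rewrite /= (pcore_norm_Syl_cap sHG pH) (pcore_norm_Syl_cap sKG pK).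
apply/bigcapsP => P /andP[sylP sKP]; rewrite inE in sylP.
exact: Syl_cap_sub sylP (subset_trans sHK sKP).
Qed.

Lemma Bp_sdr : strong_deformation_retract (in_space p G (Bp p G)).
Proof.
apply: Sp_retraction_sdr.
- exact: pradical_Bp.
- exact: Bp_sub_Sp.
- exact: pradical_id.
- exact: pradical_homo.
- by right=> H /SpP[sHG pH _]; exact: sub_pradical.
Qed.

Variable P0 : {group gT}.
Hypothesis sylP0 : p.-Sylow(G) P0.
Hypothesis ntP0 : P0 :!=: 1.

Lemma P0_Bp : P0 \in Bp p G.
Proof.
have SP0 := Sylow_Sp sylP0 ntP0.
have /SpP[sP0G pP0 _] := SP0.
suff <- : pradical P0 = P0 by exact: pradical_Bp.
apply: val_inj; apply/eqP; rewrite eqEsubset sub_pradical // andbT.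
by rewrite /= pcore_norm_Syl_cap // Syl_cap_sub.
Qed.

Lemma Syl_class_fusion : {in chains (Bp p G), forall c, {in conj_class G P0 &,
  forall M1 M2, below c M1 -> below c M2 ->
    exists2 y, y \in 'C_G(\bigcup_(H in c) H) & (M1 :^ y)%G = M2}}.
Proof.
move=> c cB M1 M2 M1C M2C cM1 cM2; set C := 'C_G(_).
have sylC M : M \in conj_class G P0 -> below c M -> p.-Sylow(C) M.
  case/imsetP=> g Gg -> cM; have sylM : p.-Sylow(G) (P0 :^ g) by rewrite pHallJ.
  apply: (pHall_subl _ (subsetIl _ _) sylM).
  by apply: below_cent cM; [exact: pHall_sub sylM | apply: Syl_abelian; rewrite inE].
have [y Cy defM2] := Sylow_trans (sylC _ M1C cM1) (sylC _ M2C cM2).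
by exists y => //; apply: val_inj; rewrite /= defM2.
Qed.

Lemma Bp_contractible : contractible (orbit_space G (Bp p G)).
Proof.
apply: cone_contractible (@conj_invariant_Bp _ G p) P0_Bp _ Syl_class_fusion.
move=> c cB; have [g Gg cP] := below_Sylow_conj sylP0 (chainsS (Bp_sub_Sp G p) cB).
by exists (P0 :^ g)%G; first exact: imset_f.
Qed.

End AbelianSylow.

Section ApRetract.
Local Open Scope group_scope.
Variables (gT : finGroupType) (G : {group gT}) (p : nat).
Hypothesis p_prime : prime p.
Hypothesis p_dvd : (p %| #|G|)%nat.

Lemma Sylow_neq1 (P : {group gT}) : p.-Sylow(G) P -> P :!=: 1.
Proof.
by move=> sylP; rewrite -cardG_gt1 (card_Hall sylP) p_part_gt1 mem_primes p_prime cardG_gt0.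
Qed.

(* The end map r = h(-, 1) is monotone and fixes A_p(G): an element y of
   order p of P gives <y> = r <y> \subset r P, and r P is elementary abelian. *)
Lemma sdr_Ap_Ohm1_Syl : strong_deformation_retract (in_space p G (Ap p G)) ->
  forall P : {group gT}, P \in 'Syl_p(G) -> p.-abelem 'Ohm_1(P).
Proof.
case=> h [h_cont _ hA h_id] P; rewrite inE => sylP.
pose pt (H : {group gT}) (SH : H \in Sp p G) : Sp_space p G := exist _ H SH.
pose xP := pt P (Sylow_Sp sylP (Sylow_neq1 sylP)).
have /ApP[_ abR _] : val (h (xP, 1%R)) \in Ap p G := hA xP.
apply: abelemS abR; change ('Ohm_1(P) \subset val (h (xP, 1%R))).
rewrite (OhmE 1 (pHall_pgroup sylP)) gen_subG.
apply/subsetP => y; rewrite !inE expn1 => /andP[Py yp].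
have [-> | nty] := eqVneq y 1; first exact: group1.
have Ay : <[y]>%G \in Ap p G.
  apply/ApP; split; last by rewrite /= cycle_eq1.
    by rewrite cycle_subG (subsetP (pHall_sub sylP)).
  by rewrite cycle_abelem ?p_prime ?orbT // order_dvdn.
pose xy := pt _ (subsetP (Ap_sub_Sp G p) _ Ay).
have hy : h (xy, 1%R) = xy by apply: h_id; [exact: Ay | exact: unit_itv1].
have h_homo := homotopy_end_homo (fun _ => subxx _) (fun _ _ _ => @subset_trans _ _ _ _) h_cont.
by have := h_homo xy xP; rewrite hy -cycle_subG; apply; rewrite /sub_le /= cycle_subG.
Qed.

End ApRetract.

Theorem proposition5p1 (gT : finGroupType) (G : {group gT}) (p : nat)
  (p_prime : prime p) (p_dvd : (p %| #|G|)%N) :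
  [/\ (strong_deformation_retract (in_space p G (Ap p G)) ->
         contractible (orbit_space G (Ap p G)) /\
         contractible (orbit_space G (Sp p G))),
      ((forall P : {group gT}, (P \in 'Syl_p(G))%g -> abelian P) ->
         strong_deformation_retract (in_space p G (Ap p G)))
    & ((forall P : {group gT}, (P \in 'Syl_p(G))%g -> abelian P) ->
         strong_deformation_retract (in_space p G (Bp p G)) /\
         contractible (orbit_space G (Bp p G)))].
Proof.
have [P0 sylP0] := Sylow_exists p G.
have ntP0 := Sylow_neq1 p_prime p_dvd sylP0.
split=> [sdrA | abSyl | abSyl].
- have Ohm1_Syl := sdr_Ap_Ohm1_Syl p_prime p_dvd sdrA.
  by split; [exact: Ap_contractible sylP0 ntP0 | exact: Sp_contractible sylP0 ntP0].
- exact/Ap_sdr/abelem_Ohm1_Syl.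
- by split; [exact: Bp_sdr | exact: Bp_contractible sylP0 ntP0].
Qed.
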